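(* Let $S$ be a left denominator set of a ring $R$ whose core $S_c$ is nonempty. Then (1) $SS_c\subseteq S_c$; and (2) for every $s\in S$ there exists $t\in S$ such that $ts\in S_c$.
   Context: All rings are associative with $1$. A multiplicative subset $S$ of $R$ ($1\in S$, $0\notin S$, closed under multiplication) is a left Ore set if $Sr\cap Rs\neq\emptyset$ for all $r\in R$, $s\in S$; for it, $\mathrm{ass}(S):=\{r\in R: sr=0\text{ for some } s\in S\}$. A left Ore set $S$ is a left denominator set if $rs=0$ ($r\in R$, $s\in S$) implies $tr=0$ for some $t\in S$. For $s\in R$, $\ker(s\cdot):=\{r\in R: sr=0\}$. The core of a left Ore set $S$ is $S_c:=\{s\in S:\ker(s\cdot)=\mathrm{ass}(S)\}$. $SS_c$ denotes $\{st: s\in S, t\in S_c\}$. *)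

From mathcomp Require Import all_boot all_algebra.
Set Implicit Arguments. Unset Strict Implicit. Unset Printing Implicit Defensive.
Import GRing.Theory.
Local Open Scope ring_scope.

Definition mult_subset (R : nzRingType) (S : R -> Prop) : Prop :=
  [/\ S 1, ~ S 0 & forall s t, S s -> S t -> S (s * t)].

Definition left_Ore_set (R : nzRingType) (S : R -> Prop) : Prop :=
  mult_subset S /\
  forall (r s : R), S s -> exists s' r', S s' /\ s' * r = r' * s.

Definition ass (R : nzRingType) (S : R -> Prop) (r : R) : Prop :=
  exists s, S s /\ s * r = 0.

Definition left_denominator_set (R : nzRingType) (S : R -> Prop) : Prop :=
  left_Ore_set S /\
  forall (r s : R), S s -> r * s = 0 -> exists t, S t /\ t * r = 0.

Definition ker_lmul (R : nzRingType) (s : R) (r : R) : Prop := s * r = 0.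

Definition core (R : nzRingType) (S : R -> Prop) (s : R) : Prop :=
  S s /\ forall r, ker_lmul s r <-> ass S r.

From mathcomp Require Import all_boot all_algebra.
Set Implicit Arguments. Unset Strict Implicit. Unset Printing Implicit Defensive.
Import GRing.Theory.
Local Open Scope ring_scope.

(* For s in S the inclusion ker(s.) ⊆ ass(S) is automatic, so s is in the core
   as soon as s kills ass(S).  Left multiplication by S maps the core into
   itself because ker(st) ⊇ ker(t).  Since the Ore condition makes ass(S) a
   left ideal, any core element c kills s·ass(S) ⊆ ass(S), so c serves as the
   required t for every s. *)

Section Core.

Variables (R : nzRingType) (S : R -> Prop).

Lemma ass_kerl s r : S s -> s * r = 0 -> ass S r.
Proof. by move=> Ss sr0; exists s. Qed.

Lemma core_ass_ker s : S s -> (forall r, ass S r -> s * r = 0) -> core S s.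
Proof.
move=> Ss ass_ker; split=> // r; split; first exact: ass_kerl.
exact: ass_ker.
Qed.

Lemma ass_mull : left_Ore_set S -> forall a r, ass S r -> ass S (a * r).
Proof.
move=> [_ Ore] a r [u [Su ur0]].
have [s' [a' [Ss' Es']]] := Ore a u Su.
by exists s'; split=> //; rewrite mulrA Es' -mulrA ur0 mulr0.
Qed.

Lemma core_mull : mult_subset S -> forall s t, S s -> core S t -> core S (s * t).
Proof.
move=> [_ _ SM] s t Ss [St t_core].
apply: core_ass_ker; first exact: SM.
by move=> r /t_core; rewrite /ker_lmul -mulrA => ->; rewrite mulr0.
Qed.

Lemma core_mulr : left_Ore_set S -> forall c s, core S c -> S s -> core S (c * s).
Proof.
move=> OreS c s [Sc c_core] Ss.
have [[_ _ SM] _] := OreS.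
apply: core_ass_ker; first exact: SM.
by move=> r /(ass_mull OreS s) /c_core; rewrite /ker_lmul mulrA.
Qed.

End Core.

Theorem lemma4p1 (R : nzRingType) (S : R -> Prop) :
  left_denominator_set S ->
  (exists s, core S s) ->
  (forall s t, S s -> core S t -> core S (s * t)) /\
  (forall s, S s -> exists t, S t /\ core S (t * s)).
Proof.
move=> [OreS _] [c c_core]; have [multS _] := OreS.
split; first exact: core_mull.
move=> s Ss; exists c; split; first by case: c_core.
exact: core_mulr.
Qed.
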